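(* Let $V$ be a real vector space of dimension $m\ge3$ with a non-degenerate symmetric inner product of arbitrary signature, and let $R$ be an algebraic curvature tensor on $V$. Then: (1) if $R$ is $k$-stein, then $\operatorname{trace}\{\mathcal{J}_R(x)^k\}=0$ for all $x\in\mathcal{N}$; (2) if $R$ is $m$-stein, then $\mathcal{J}_R(x)$ is nilpotent for all $x\in\mathcal{N}$; (3) if $\operatorname{trace}\{\mathcal{J}_R(x)\}=0$ for all $x\in\mathcal{N}$, then $R$ is Einstein.
   Context: An algebraic curvature tensor is $R\in\otimes^4V^*$ with $R(x,y,z,w)=R(z,w,x,y)=-R(y,x,z,w)$ and $R(x,y,z,w)+R(y,z,x,w)+R(z,x,y,w)=0$. The Jacobi operator is defined by $(\mathcal{J}_R(x)y,w)=R(y,x,x,w)$. The Ricci tensor is $\rho_R(x,y)=\operatorname{trace}\{z\mapsto R(z,x)y\}$, so that $\rho_R(x,x)=\operatorname{trace}\,\mathcal{J}_R(x)$. $R$ is Einstein if there is a constant $c_1$ with $\rho_R(x,y)=c_1(x,y)$ for all $x,y\in V$. $R$ is $k$-stein if there are constants $c_i$ with $\operatorname{trace}\{\mathcal{J}_R(x)^i\}=c_i(x,x)^i$ for all $x\in V$ and $1\le i\le k$. Everything is extended complex-multilinearly to $V_{\mathbb{C}}=V\otimes\mathbb{C}$; $\mathcal{N}=\{v\in V_{\mathbb{C}}:(v,v)=0\}$. A linear map $A$ is nilpotent if $A^m=0$, equivalently $\operatorname{trace}(A^i)=0$ for $1\le i\le m$. *)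

From HB Require Import structures.
From mathcomp Require Import all_boot all_order all_algebra.
From mathcomp Require Import reals.
From mathcomp Require Import complex.
Set Implicit Arguments. Unset Strict Implicit. Unset Printing Implicit Defensive.
Import Order.TTheory GRing.Theory Num.Theory.
Local Open Scope ring_scope.

Definition ip {F : comNzRingType} {m : nat} (G : 'M[F]_m) (x y : 'rV[F]_m) : F :=
  (x *m G *m y^T) 0 0.

Definition tensor4 (F : Type) (m : nat) := 'I_m -> 'I_m -> 'I_m -> 'I_m -> F.

Definition Rform {F : comNzRingType} {m : nat} (T : tensor4 F m)
  (x y z w : 'rV[F]_m) : F :=
  \sum_(i < m) \sum_(j < m) \sum_(k < m) \sum_(l < m)
     x 0 i * y 0 j * z 0 k * w 0 l * T i j k l.

Definition is_ACT {F : comNzRingType} {m : nat} (T : tensor4 F m) : Prop :=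
  forall x y z w : 'rV[F]_m,
    [/\ Rform T x y z w = Rform T z w x y,
        Rform T x y z w = - Rform T y x z w &
        Rform T x y z w + Rform T y z x w + Rform T z x y w = 0].

(* Jacobi operator: (J(x)y, w) = R(y,x,x,w), i.e. J(x)y = R(y,x)x. *)
Definition jacobi {F : fieldType} {m : nat} (G : 'M[F]_m) (T : tensor4 F m)
  (x : 'rV[F]_m) : 'M[F]_m :=
  (\matrix_(j < m, l < m) Rform T (delta_mx 0 j) x x (delta_mx 0 l)) *m invmx G.

(* Ricci tensor: rho(x,y) = trace { z |-> R(z,x) y }. *)
Definition ricci {F : fieldType} {m : nat} (G : 'M[F]_m) (T : tensor4 F m)
  (x y : 'rV[F]_m) : F :=
  \tr ((\matrix_(i < m, l < m) Rform T (delta_mx 0 i) x y (delta_mx 0 l)) *m invmx G).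

Definition einstein {F : fieldType} {m : nat} (G : 'M[F]_m) (T : tensor4 F m) : Prop :=
  exists c1 : F, forall x y : 'rV[F]_m, ricci G T x y = c1 * ip G x y.

Definition k_stein {F : fieldType} {m : nat} (k : nat) (G : 'M[F]_m) (T : tensor4 F m) : Prop :=
  exists c : nat -> F, forall (x : 'rV[F]_m) (i : nat), (1 <= i <= k)%N ->
    \tr (jacobi G T x ^+ i) = c i * ip G x x ^+ i.

Definition nilpotent_mx {F : fieldType} {m : nat} (A : 'M[F]_m) : Prop :=
  exists n : nat, A ^+ n = 0.

Definition cplxT {R : rcfType} {m : nat} (T : tensor4 R m) : tensor4 (complex R) m :=
  fun i j k l => Complex (T i j k l) 0.
Definition cplxG {R : rcfType} {m : nat} (G : 'M[R]_m) : 'M[complex R]_m :=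
  map_mx (fun r : R => Complex r 0) G.

Definition nullcone {R : rcfType} {m : nat} (G : 'M[R]_m) (v : 'rV[complex R]_m) : Prop :=
  ip (cplxG G) v v = 0.

(* Part (1): on real vectors x |-> tr J(x)^k - c (x,x)^k vanishes identically.  It is a
   polynomial in the coordinates, so it also vanishes on V_C: along a complex line a + t b
   it is a polynomial in t with a root at every natural number.  On the null cone this
   reads tr J(v)^k = 0.  Part (2): if tr J(v)^k = 0 for k = 1..m, the power sums of the
   diagonal of a triangular form of J(v) vanish, so the diagonal is zero and J(v) is
   nilpotent.  Part (3): tr J(v) = rho(v,v), so it suffices that a symmetric form S on C^m
   vanishing on the null cone of a nondegenerate symmetric form G (m >= 2) is a multiple
   of G.  For G(x,x) <> 0, the form B = G(x,x) S - S(x,x) G vanishes at x and on the null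
   cone, hence at every y whose line y + t x meets the null cone twice, i.e. off the zeros
   of the discriminant G(x,y)^2 - G(x,x) G(y,y).  That discriminant is a nonzero quadratic
   form since G has rank at least 2, so B vanishes identically. *)

From HB Require Import structures.
From mathcomp Require Import all_boot all_order all_algebra.
From mathcomp Require Import reals complex spectral ring.
From Stdlib Require Import Classical.
Set Implicit Arguments.
Unset Strict Implicit.
Unset Printing Implicit Defensive.
Import Order.TTheory GRing.Theory Num.Theory.
Local Open Scope complex_scope.
Local Open Scope ring_scope.

Section InnerProduct.
Variables (F : comNzRingType) (m : nat).
Implicit Types (M N : 'M[F]_m) (x y z w : 'rV[F]_m).

Lemma ipDl M x y z : ip M (x + y) z = ip M x z + ip M y z.
Proof. by rewrite /ip !mulmxDl mxE. Qed.

Lemma ipDr M x y z : ip M x (y + z) = ip M x y + ip M x z.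
Proof. by rewrite /ip linearD /= mulmxDr mxE. Qed.

Lemma ipZl M a x y : ip M (a *: x) y = a * ip M x y.
Proof. by rewrite /ip -!scalemxAl mxE. Qed.

Lemma ipZr M a x y : ip M x (a *: y) = a * ip M x y.
Proof. by rewrite /ip linearZ /= -scalemxAr mxE. Qed.

Lemma ip_mxB M N x y : ip (M - N) x y = ip M x y - ip N x y.
Proof. by rewrite /ip mulmxBr mulmxBl !mxE. Qed.

Lemma ip_mxZ a M x y : ip (a *: M) x y = a * ip M x y.
Proof. by rewrite /ip -scalemxAr -scalemxAl mxE. Qed.

Lemma ipC M x y : M^T = M -> ip M x y = ip M y x.
Proof.
move=> sM; rewrite /ip -[in LHS](trmxK (x *m M *m y^T)) mxE.
by rewrite !trmx_mul trmxK sM mulmxA.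
Qed.

Lemma ipE M x y : ip M x y = \sum_i \sum_j x 0 i * M i j * y 0 j.
Proof.
rewrite /ip mxE; under eq_bigr do rewrite !mxE mulr_suml.
by rewrite exchange_big.
Qed.

Lemma ip_delta M i j : ip M (delta_mx 0 i) (delta_mx 0 j) = M i j.
Proof. by rewrite /ip trmx_delta -rowE -colE !mxE. Qed.

Lemma ip_line M y w t : M^T = M ->
  ip M (y + t *: w) (y + t *: w) = ip M y y + t * ip M y w *+ 2 + t ^+ 2 * ip M w w.
Proof. by move=> sM; rewrite !ipDl !ipDr !ipZl !ipZr (ipC y w sM); ring. Qed.

End InnerProduct.

Lemma ip_map (F1 F2 : comNzRingType) (f : {rmorphism F1 -> F2}) m (M : 'M[F1]_m) x y :
  f (ip M x y) = ip (map_mx f M) (map_mx f x) (map_mx f y).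
Proof. by rewrite /ip map_trmx -!map_mxM [RHS]mxE. Qed.

Section SymmetricForms.
Variables (F : numDomainType) (m : nat).
Implicit Types (M : 'M[F]_m).

Lemma sym_form_eq0 M : M^T = M -> (forall x, ip M x x = 0) -> M = 0.
Proof.
move=> sM M0; apply/matrixP => i j; rewrite mxE -ip_delta.
have := ip_line (delta_mx 0 i) (delta_mx 0 j) 1 sM.
rewrite !M0 mulr0 addr0 add0r mul1r => /esym/eqP.
by rewrite mulrn_eq0 => /eqP.
Qed.

Lemma exists_anisotropic M : M^T = M -> M != 0 -> exists x, ip M x x != 0.
Proof.
move=> sM /eqP M_neq0; apply: not_all_not_ex => M0; apply: M_neq0.
by apply: sym_form_eq0 sM _ => x; apply/eqP/negbNE/negP/M0.
Qed.

End SymmetricForms.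

Lemma sym_form_proportional (F : numFieldType) m (M N : 'M[F]_m) x0 :
  M^T = M -> N^T = N -> ip N x0 x0 != 0 ->
  (forall w, ip M w w * ip N x0 x0 = ip M x0 x0 * ip N w w) ->
  M = (ip M x0 x0 / ip N x0 x0) *: N.
Proof.
move=> sM sN Nx0 prop; apply/eqP; rewrite -subr_eq0; apply/eqP.
apply: sym_form_eq0 => [|w]; first by rewrite linearB /= linearZ /= sM sN.
by rewrite ip_mxB ip_mxZ mulrAC -prop mulfK ?subrr.
Qed.

Lemma sum_delta_mx (F : pzSemiRingType) m (i : 'I_m) (g : 'I_m -> F) :
  \sum_j (delta_mx 0 i : 'rV[F]_m) 0 j * g j = g i.
Proof.
rewrite (bigD1 i) //= big1 ?addr0 => [|j /negbTE ne]; first by rewrite mxE !eqxx mul1r.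
by rewrite mxE ne andbF mul0r.
Qed.

Section Tensors.
Variables (F : comNzRingType) (m : nat) (T : tensor4 F m).

Lemma Rform_delta i x y l :
  Rform T (delta_mx 0 i) x y (delta_mx 0 l) = \sum_j \sum_k x 0 j * y 0 k * T i j k l.
Proof.
pose e (n : 'I_m) : 'rV[F]_m := delta_mx 0 n.
transitivity (\sum_i0 e i 0 i0 * \sum_j \sum_k \sum_l0 e l 0 l0 * (x 0 j * y 0 k * T i0 j k l0)).
  apply: eq_bigr => i0 _; rewrite mulr_sumr; apply: eq_bigr => j _.
  rewrite mulr_sumr; apply: eq_bigr => k _; rewrite !mulr_sumr.
  by apply: eq_bigr => l0 _; ring.
by rewrite sum_delta_mx; apply: eq_bigr => j _; apply: eq_bigr => k _; apply: sum_delta_mx.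
Qed.

Lemma Rform_delta4 a b c d :
  Rform T (delta_mx 0 a) (delta_mx 0 b) (delta_mx 0 c) (delta_mx 0 d) = T a b c d.
Proof.
rewrite Rform_delta; under eq_bigr do under eq_bigr do rewrite -mulrA.
by under eq_bigr do rewrite -mulr_sumr sum_delta_mx; rewrite sum_delta_mx.
Qed.

Lemma ACT_pair_sym : is_ACT T -> forall a b c d, T a b c d = T d c b a.
Proof.
move=> hT a b c d; rewrite -!Rform_delta4.
set e := delta_mx 0 : 'I_m -> 'rV[F]_m.
have [-> _ _] := hT (e a) (e b) (e c) (e d).
have [_ -> _] := hT (e c) (e d) (e a) (e b).
have [-> _ _] := hT (e d) (e c) (e a) (e b).
have [_ -> _] := hT (e a) (e b) (e d) (e c).
have [-> _ _] := hT (e b) (e a) (e d) (e c).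
by rewrite opprK.
Qed.

End Tensors.

Lemma Rform_map (F1 F2 : comNzRingType) (f : {rmorphism F1 -> F2}) m
    (T : tensor4 F1 m) (T' : tensor4 F2 m) x y z w :
  (forall i j k l, T' i j k l = f (T i j k l)) ->
  f (Rform T x y z w) = Rform T' (map_mx f x) (map_mx f y) (map_mx f z) (map_mx f w).
Proof.
move=> hT'; rewrite /Rform !rmorph_sum; apply: eq_bigr => i _.
rewrite rmorph_sum; apply: eq_bigr => j _; rewrite rmorph_sum; apply: eq_bigr => k _.
by rewrite rmorph_sum; apply: eq_bigr => l _; rewrite !rmorphM !mxE hT'.
Qed.

Definition ricci_mx {F : fieldType} {m} (G : 'M[F]_m) (T : tensor4 F m) : 'M[F]_m :=
  \matrix_(j, k) \sum_a \sum_b T a j k b * invmx G b a.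

Lemma ricciE (F : fieldType) m (G : 'M[F]_m) T x y : ricci G T x y = ip (ricci_mx G T) x y.
Proof.
rewrite ipE /ricci /mxtrace.
under eq_bigr do rewrite mxE.
under eq_bigr do under eq_bigr do rewrite mxE Rform_delta mulr_suml.
under eq_bigr do under eq_bigr do under eq_bigr do rewrite mulr_suml.
under eq_bigr do rewrite exchange_big.
rewrite exchange_big.
under eq_bigr do under eq_bigr do rewrite exchange_big.
under eq_bigr do rewrite exchange_big.
apply: eq_bigr => j _; apply: eq_bigr => k _.
rewrite mxE mulr_sumr mulr_suml; apply: eq_bigr => a _.
by rewrite mulr_sumr mulr_suml; apply: eq_bigr => b _; ring.
Qed.

Lemma ricci_mx_sym (F : fieldType) m (G : 'M[F]_m) T :
  G^T = G -> is_ACT T -> (ricci_mx G T)^T = ricci_mx G T.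
Proof.
move=> sG hT; have sGi : (invmx G)^T = invmx G by rewrite trmx_inv sG.
apply/matrixP => j k; rewrite !mxE.
under [RHS]eq_bigr do under eq_bigr do rewrite (ACT_pair_sym hT).
rewrite [RHS]exchange_big; apply: eq_bigr => a _; apply: eq_bigr => b _.
by rewrite -[in RHS]sGi mxE.
Qed.

Lemma map_ricci_mx (F1 F2 : fieldType) (f : {rmorphism F1 -> F2}) m (G : 'M[F1]_m)
    (T : tensor4 F1 m) (T' : tensor4 F2 m) :
  (forall i j k l, T' i j k l = f (T i j k l)) ->
  map_mx f (ricci_mx G T) = ricci_mx (map_mx f G) T'.
Proof.
move=> hT'; apply/matrixP => j k; rewrite !mxE rmorph_sum -map_invmx.
apply: eq_bigr => a _; rewrite rmorph_sum; apply: eq_bigr => b _.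
by rewrite rmorphM hT' mxE.
Qed.

Lemma map_mxX (F1 F2 : comNzRingType) (f : {rmorphism F1 -> F2}) n (A : 'M[F1]_n) k :
  map_mx f (A ^+ k) = map_mx f A ^+ k.
Proof.
elim: k => [|k IHk]; first by rewrite !expr0 map_scalar_mx rmorph1.
by rewrite !exprS -!mulmxE map_mxM IHk.
Qed.

(* [jacobi] with the inverse Gram matrix as a parameter, so that it makes sense over any
   commutative ring, e.g. over polynomials. *)
Definition jacobi_mx {F : comNzRingType} {m} (Ginv : 'M[F]_m) (T : tensor4 F m)
    (x : 'rV[F]_m) : 'M[F]_m :=
  (\matrix_(j, l) Rform T (delta_mx 0 j) x x (delta_mx 0 l)) *m Ginv.

Definition stein_defect {F : comNzRingType} {m} (k : nat) (Ginv G : 'M[F]_m)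
    (T : tensor4 F m) (c : F) (x : 'rV[F]_m) : F :=
  \tr (jacobi_mx Ginv T x ^+ k) - c * ip G x x ^+ k.

Section MapJacobi.
Variables (F1 F2 : comNzRingType) (f : {rmorphism F1 -> F2}) (m : nat).
Variables (T : tensor4 F1 m) (T' : tensor4 F2 m).
Hypothesis fT : forall i j k l, T' i j k l = f (T i j k l).

Lemma map_jacobi_mx Ginv x :
  map_mx f (jacobi_mx Ginv T x) = jacobi_mx (map_mx f Ginv) T' (map_mx f x).
Proof.
rewrite /jacobi_mx map_mxM; congr (_ *m _); apply/matrixP => j l.
by rewrite !mxE (Rform_map _ _ _ _ fT) !map_delta_mx.
Qed.

Lemma map_stein_defect k Ginv G c x :
  f (stein_defect k Ginv G T c x) =
  stein_defect k (map_mx f Ginv) (map_mx f G) T' (f c) (map_mx f x).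
Proof.
by rewrite /stein_defect rmorphB rmorphM rmorphXn -trace_map_mx map_mxX map_jacobi_mx ip_map.
Qed.

End MapJacobi.

Lemma poly_nat_root_eq0 (F : numDomainType) (p : {poly F}) :
  (forall n : nat, p.[n%:R] = 0) -> p = 0.
Proof.
move=> p0; apply/eqP; apply: contraT => p_neq0.
have := @max_poly_roots _ p [seq i%:R | i <- iota 0 (size p)] p_neq0.
rewrite size_map size_iota ltnn; apply.
  by apply/allP => _ /mapP [i _ ->]; rewrite /root p0.
by rewrite map_inj_uniq ?iota_uniq // => i j /eqP; rewrite eqr_nat => /eqP.
Qed.

Lemma stein_defect_complexify (R : rcfType) m k (Ginv G : 'M[R]_m) (T : tensor4 R m) c :
  (forall x, stein_defect k Ginv G T c x = 0) ->
  forall v, stein_defect k (cplxG Ginv) (cplxG G) (cplxT T) c%:C v = 0.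
Proof.
move=> defect0 v; pose f := real_complex R.
pose a := map_mx (@complex.Re R) v; pose b := map_mx (@complex.Im R) v.
have -> : v = map_mx f a + 'i *: map_mx f b.
  by apply/matrixP => i j; rewrite !mxE {1}[v i j]complexE.
(* P.[t] is the defect at a + t b, which is a real vector when t is a natural number. *)
pose lift p q (M : 'M[R]_(p, q)) := map_mx polyC (map_mx f M).
pose P := stein_defect k (lift _ _ Ginv) (lift _ _ G) (fun i j k l => (cplxT T i j k l)%:P)
  c%:C%:P (lift _ _ a + 'X *: lift _ _ b).
have evalP t : P.[t] =
    stein_defect k (cplxG Ginv) (cplxG G) (cplxT T) c%:C (map_mx f a + t *: map_mx f b).
  have evalC p q (M : 'M[complex R]_(p, q)) : map_mx (horner_eval t) (map_mx polyC M) = M.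
    by rewrite -map_mx_comp map_mx_id // => z; rewrite /= horner_evalE hornerC.
  rewrite -horner_evalE (map_stein_defect (T' := cplxT T)) => [|i j k' l]; last first.
    by rewrite /= horner_evalE hornerC.
  by rewrite map_mxD map_mxZ !evalC /= !horner_evalE hornerX hornerC.
have P0 : P = 0.
  apply: poly_nat_root_eq0 => n; rewrite evalP.
  have -> : map_mx f a + n%:R *: map_mx f b = map_mx f (a + n%:R *: b).
    by rewrite map_mxD map_mxZ rmorph_nat.
  by rewrite -[RHS](rmorph0 f) -(defect0 (a + n%:R *: b)) (map_stein_defect (T' := cplxT T)).
by have := evalP 'i; rewrite P0 horner0.
Qed.

Lemma trace_jacobi_null_cone (R : rcfType) m (G : 'M[R]_m) (T : tensor4 R m) k c :
  (0 < k)%N -> (forall x, \tr (jacobi G T x ^+ k) = c * ip G x x ^+ k) ->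
  forall v, nullcone G v -> \tr (jacobi (cplxG G) (cplxT T) v ^+ k) = 0.
Proof.
move=> k_gt0 stein v v_null.
have defect0 x : stein_defect k (invmx G) G T c x = 0 by apply/eqP; rewrite subr_eq0 stein.
have := stein_defect_complexify defect0 v.
have -> : cplxG (invmx G) = invmx (cplxG G) := map_invmx (real_complex R) G.
by rewrite /stein_defect v_null expr0n eqn0Ngt k_gt0 mulr0 subr0.
Qed.

Section TriangularPowers.
Variables (F : comNzRingType) (n : nat).
Implicit Types A B : 'M[F]_n.

Lemma is_trig_mxM A B : is_trig_mx A -> is_trig_mx B -> is_trig_mx (A *m B).
Proof.
move=> /is_trig_mxP A_trig /is_trig_mxP B_trig; apply/is_trig_mxP => i j lt_ij.
rewrite mxE big1 // => l _; have [lt_il|le_li] := ltnP i l; first by rewrite A_trig ?mul0r.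
by rewrite B_trig ?mulr0 // (leq_ltn_trans le_li lt_ij).
Qed.

Lemma trig_mulmx_diag A B i :
  is_trig_mx A -> is_trig_mx B -> (A *m B) i i = A i i * B i i.
Proof.
move=> /is_trig_mxP A_trig /is_trig_mxP B_trig.
rewrite mxE (bigD1 i) //= big1 ?addr0 // => l ne_li.
have [lt_il|le_li] := ltnP i l; first by rewrite A_trig ?mul0r.
by rewrite B_trig ?mulr0 // ltn_neqAle ne_li le_li.
Qed.

Lemma is_trig_mxX A k : is_trig_mx A -> is_trig_mx (A ^+ k).
Proof.
move=> A_trig; elim: k => [|k IHk]; first exact: scalar_mx_is_trig.
by rewrite exprS -mulmxE is_trig_mxM.
Qed.

Lemma mxtrace_trigX A k : is_trig_mx A -> \tr (A ^+ k) = \sum_i A i i ^+ k.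
Proof.
move=> A_trig; apply: eq_bigr => i _; elim: k => [|k IHk]; first by rewrite !expr0 mxE eqxx.
by rewrite !exprS -mulmxE trig_mulmx_diag ?is_trig_mxX // IHk.
Qed.

End TriangularPowers.

Lemma power_sums_eq0 (F : numFieldType) n (d : 'I_n -> F) :
  (forall k, (0 < k <= n)%N -> \sum_i d i ^+ k = 0) -> forall i, d i = 0.
Proof.
move=> sum_pow0 i0; apply/eqP; apply: contraT => mu_neq0; set mu := d i0 in mu_neq0.
(* \sum_j p (d j) is a combination of the power sums, hence 0, but it also equals
   #{j | d j = mu} p(mu) <> 0. *)
pose others := [pred j | (d j != 0) && (d j != mu)].
pose s := [seq d j | j <- enum others].
pose p := \prod_(a <- s) ('X - a%:P) * 'X.
have size_s : (size s < n)%N.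
  rewrite size_map -cardE -[X in (_ < X)%N]card_ord; apply: proper_card.
  by apply/properP; split; [apply/subsetP | exists i0; rewrite ?inE ?eqxx ?andbF].
have size_p : size p = (size s).+2.
  by rewrite size_mulX ?size_prod_XsubC // -size_poly_eq0 size_prod_XsubC.
have p_root j : d j != mu -> p.[d j] = 0.
  move=> dj_neq_mu; rewrite hornerMX; have [->|dj_neq0] := eqVneq (d j) 0.
    by rewrite mulr0.
  have /rootP -> : root (\prod_(a <- s) ('X - a%:P)) (d j).
    by rewrite root_prod_XsubC; apply: map_f; rewrite mem_enum inE dj_neq0.
  by rewrite mul0r.
have p_mu : p.[mu] != 0.
  rewrite hornerMX mulf_neq0 // -rootE root_prod_XsubC.
  apply/mapP => -[j]; rewrite mem_enum inE => /andP[_ dj_neq_mu] mu_eq.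
  by rewrite mu_eq eqxx in dj_neq_mu.
have : \sum_j p.[d j] = 0.
  under eq_bigr do rewrite horner_coef.
  rewrite exchange_big big1 // => -[[|k] lt_k_p] _ /=.
    by rewrite coefMX eqxx; apply: big1 => j _; rewrite mul0r.
  rewrite -mulr_sumr sum_pow0 ?mulr0 //=.
  by move: lt_k_p; rewrite size_p !ltnS => /leq_ltn_trans; apply.
rewrite (bigID [pred j | d j == mu]) /= [X in _ + X]big1 => [|j /p_root //].
rewrite addr0 (eq_bigr (fun=> p.[mu])) => [|j /eqP -> //].
rewrite sumr_const => /eqP; rewrite -mulr_natl mulf_eq0 (negPf p_mu) orbF pnatr_eq0.
have card_mu_gt0 : (0 < #|[pred j | d j == mu]|)%N by apply/card_gt0P; exists i0; rewrite inE.
by move/eqP => card_mu0; rewrite card_mu0 in card_mu_gt0.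
Qed.

Lemma trace_powers_nilpotent (C : numClosedFieldType) n (A : 'M[C]_n) :
  (forall k, (0 < k <= n)%N -> \tr (A ^+ k) = 0) -> A ^+ n = 0.
Proof.
case: n A => [|n] A trA0; first exact: flatmx0.
have [P P_unitary] := Schur A (ltn0Sn n); have P_unit := unitarymx_unit P_unitary.
rewrite /similar_to conjumx //; set B := P *m A *m invmx P => B_trig.
have BX k : B ^+ k = P *m A ^+ k *m invmx P.
  elim: k => [|k IHk]; first by rewrite !expr0 mulmx1 mulmxV.
  by rewrite exprS -mulmxE IHk /B !mulmxA mulmxKV // exprS -mulmxE !mulmxA.
have B_diag0 : forall i, B i i = 0.
  apply: power_sums_eq0 => k k_range.
  by rewrite -mxtrace_trigX // BX mxtrace_mulC mulmxA mulVmx // mul1mx trA0.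
have charB : char_poly B = 'X^(n.+1).
  rewrite char_poly_trig //; under eq_bigr do rewrite B_diag0 subr0.
  by rewrite prodr_const card_ord.
have := Cayley_Hamilton B; rewrite charB rmorphXn /= horner_mx_X BX.
by move/(congr1 (fun M => invmx P *m M *m P)); rewrite mulmx0 mul0mx !mulmxA mulVmx // mul1mx mulmxKV.
Qed.

Definition ip_line_poly {F : comNzRingType} {m} (M : 'M[F]_m) (y w : 'rV[F]_m) : {poly F} :=
  Poly [:: ip M y y; ip M y w *+ 2; ip M w w].

Lemma horner_ip_line_poly (F : comNzRingType) m (M : 'M[F]_m) y w t :
  M^T = M -> (ip_line_poly M y w).[t] = ip M (y + t *: w) (y + t *: w).
Proof. by move=> sM; rewrite ip_line // horner_Poly /=; ring. Qed.

Lemma ip_eq0_off_zeros (F : numDomainType) m (M N : 'M[F]_m) y0 :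
  M^T = M -> N^T = N -> ip N y0 y0 != 0 ->
  (forall y, ip N y y != 0 -> ip M y y = 0) -> forall w, ip M w w = 0.
Proof.
move=> sM sN N_y0 M_off w.
have Np_0 : (ip_line_poly N y0 w).[0] = ip N y0 y0.
  by rewrite horner_ip_line_poly // scale0r addr0.
have Np_neq0 : ip_line_poly N y0 w != 0.
  by apply: contraNneq N_y0 => Np0; rewrite -Np_0 Np0 horner0.
have : ip_line_poly N y0 w * ip_line_poly M y0 w = 0.
  apply: poly_nat_root_eq0 => n; rewrite hornerM !horner_ip_line_poly //.
  set y := y0 + n%:R *: w; have [->|/M_off ->] := eqVneq (ip N y y) 0.
    by rewrite mul0r.
  by rewrite mulr0.
move/eqP; rewrite mulf_eq0 (negPf Np_neq0) /= => /eqP Mp0.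
by have := congr1 (fun p : {poly F} => p`_2) Mp0; rewrite coef_Poly coef0.
Qed.

Lemma quadratic_two_roots (C : numClosedFieldType) (a b c : C) :
  a != 0 -> b ^+ 2 - a * c != 0 ->
  exists t1 t2, [/\ t1 != t2, c + t1 * b *+ 2 + t1 ^+ 2 * a = 0
                            & c + t2 * b *+ 2 + t2 ^+ 2 * a = 0].
Proof.
move=> a_neq0 discr_neq0; set s := sqrtC (b ^+ 2 - a * c).
have s2 : s ^+ 2 = b ^+ 2 - a * c := sqrtCK _.
have root e : e ^+ 2 = 1 ->
    c + (- b + e * s) / a * b *+ 2 + ((- b + e * s) / a) ^+ 2 * a = 0.
  move=> e2; apply: (mulIf a_neq0); rewrite mul0r.
  have -> : (c + (- b + e * s) / a * b *+ 2 + ((- b + e * s) / a) ^+ 2 * a) * a =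
            e ^+ 2 * s ^+ 2 - (b ^+ 2 - a * c) by field.
  by rewrite e2 mul1r s2 subrr.
exists ((- b + 1 * s) / a), ((- b + (-1) * s) / a); split.
- rewrite (can_eq (divfK a_neq0)) (can_eq (addKr _)) mulN1r mul1r -addr_eq0 -mulr2n.
  by rewrite mulrn_eq0 /= sqrtC_eq0.
- exact/root/expr1n.
- by apply: root; rewrite sqrrN expr1n.
Qed.

Lemma affine_two_zeros_eq0 (F : idomainType) (u v t1 t2 : F) :
  t1 != t2 -> u + t1 * v = 0 -> u + t2 * v = 0 -> u = 0.
Proof.
move=> t12 e1 e2; have : (t1 - t2) * v = (u + t1 * v) - (u + t2 * v) by ring.
rewrite e1 e2 subrr => /eqP; rewrite mulf_eq0 subr_eq0 (negPf t12) /= => /eqP v0.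
by rewrite v0 mulr0 addr0 in e1.
Qed.

Section NullCone.
Variables (C : numClosedFieldType) (m : nat) (G S : 'M[C]_m).
Hypotheses (m_gt1 : (1 < m)%N) (sG : G^T = G) (sS : S^T = S) (G_unit : G \in unitmx).
Hypothesis S_null : forall v, ip G v v = 0 -> ip S v v = 0.

Section Anisotropic.
Variable x : 'rV[C]_m.
Hypothesis Gx_neq0 : ip G x x != 0.

Let B := ip G x x *: S - ip S x x *: G.
Let discr := (x *m G)^T *m (x *m G) - ip G x x *: G.

Let sB : B^T = B.
Proof. by rewrite /B linearB /= !linearZ /= sS sG. Qed.

Let sdiscr : discr^T = discr.
Proof. by rewrite /discr linearB /= linearZ /= trmx_mul trmxK sG. Qed.

Let discrE y : ip discr y y = ip G x y ^+ 2 - ip G x x * ip G y y.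
Proof.
rewrite ip_mxB ip_mxZ; congr (_ - _).
rewrite /ip; set u := x *m G; rewrite mulmxA -(mulmxA _ u) mxE big_ord1 expr2.
by rewrite -[y *m u^T]trmxK trmx_mul !trmxK mxE.
Qed.

Let discr_neq0 : discr != 0.
Proof.
apply/eqP => /eqP; rewrite subr_eq0 => /eqP xGxG.
have := leq_trans (mxrankM_maxr (x *m G)^T (x *m G)) (rank_leq_row (x *m G)).
by rewrite xGxG mxrank_scale_nz // mxrank_unit // leqNgt m_gt1.
Qed.

Let ipB_x : ip B x x = 0.
Proof. by rewrite ip_mxB !ip_mxZ mulrC subrr. Qed.

Let ipB_null v : ip G v v = 0 -> ip B v v = 0.
Proof. by move=> Gv0; rewrite ip_mxB !ip_mxZ Gv0 S_null // !mulr0 subrr. Qed.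

(* The line y + t x meets the null cone twice, and B is affine along it. *)
Let ipB_off_discr y : ip discr y y != 0 -> ip B y y = 0.
Proof.
rewrite discrE (ipC _ _ sG) => discr_y.
have [t1 [t2 [t12 null1 null2]]] := quadratic_two_roots Gx_neq0 discr_y.
have B_line t : ip G y y + t * ip G y x *+ 2 + t ^+ 2 * ip G x x = 0 ->
    ip B y y + t * (ip B y x *+ 2) = 0.
  move=> null_t; have := @ipB_null (y + t *: x).
  by rewrite !ip_line // ipB_x mulr0 addr0 mulrnAr; apply.
exact: affine_two_zeros_eq0 t12 (B_line _ null1) (B_line _ null2).
Qed.

Lemma null_cone_proportional_at w : ip S w w * ip G x x = ip S x x * ip G w w.
Proof.
have [y0 discr_y0] := exists_anisotropic sdiscr discr_neq0.
have := ip_eq0_off_zeros sB sdiscr discr_y0 ipB_off_discr w.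
by rewrite ip_mxB !ip_mxZ mulrC => /eqP; rewrite subr_eq0 => /eqP.
Qed.

End Anisotropic.

Lemma null_cone_proportional x w : ip S w w * ip G x x = ip S x x * ip G w w.
Proof.
have [Gx0|Gx_neq0] := eqVneq (ip G x x) 0; last exact: null_cone_proportional_at.
by rewrite Gx0 (S_null Gx0) mulr0 mul0r.
Qed.

End NullCone.

Lemma k_stein_trace_null_cone (R : rcfType) m (G : 'M[R]_m) (T : tensor4 R m) k :
  (0 < k)%N -> k_stein k G T ->
  forall v, nullcone G v -> \tr (jacobi (cplxG G) (cplxT T) v ^+ k) = 0.
Proof.
move=> k_gt0 [c stein]; apply: (trace_jacobi_null_cone (c := c k)) => // x.
by apply: stein; rewrite k_gt0 leqnn.
Qed.

Lemma m_stein_nilpotent_null_cone (R : rcfType) m (G : 'M[R]_m) (T : tensor4 R m) :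
  k_stein m G T ->
  forall v, nullcone G v -> nilpotent_mx (jacobi (cplxG G) (cplxT T) v).
Proof.
move=> [c stein] v v_null; exists m; apply: trace_powers_nilpotent => k /andP[k_gt0 k_le_m].
apply: (trace_jacobi_null_cone (c := c k)) => // x.
by apply: stein; rewrite k_gt0.
Qed.

Lemma einstein_of_null_cone_trace (R : rcfType) m (G : 'M[R]_m) (T : tensor4 R m) :
  (1 < m)%N -> G^T = G -> \det G != 0 -> is_ACT T ->
  (forall v, nullcone G v -> \tr (jacobi (cplxG G) (cplxT T) v) = 0) -> einstein G T.
Proof.
move=> m_gt1 sG detG hT trJ0; pose f := real_complex R.
pose S := ricci_mx G T; have sS : S^T = S := ricci_mx_sym sG hT.
have G_unit : G \in unitmx by rewrite unitmxE unitfE.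
have G_neq0 : G != 0.
  by apply: contraTneq m_gt1 => G0; rewrite -(mxrank_unit G_unit) G0 mxrank0.
have prop x w : ip S w w * ip G x x = ip S x x * ip G w w.
  apply: (fmorph_inj f); rewrite !rmorphM !ip_map.
  apply: null_cone_proportional => // [||| v v_null].
  - by rewrite map_trmx sG.
  - by rewrite map_trmx sS.
  - by rewrite map_unitmx.
  - have -> : map_mx f S = ricci_mx (cplxG G) (cplxT T) by apply: map_ricci_mx.
    by rewrite -ricciE; apply: trJ0.
have [x0 Gx0] := exists_anisotropic sG G_neq0.
have S_scalar := sym_form_proportional sS sG Gx0 (prop x0).
by exists (ip S x0 x0 / ip G x0 x0) => x y; rewrite ricciE -/S {1}S_scalar ip_mxZ.
Qed.

Theorem lemma2p1 (R : realType) (m : nat) (G : 'M[R]_m) (T : tensor4 R m) :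
  (3 <= m)%N -> G^T = G -> \det G != 0 -> is_ACT T ->
  [/\ (forall k : nat, (1 <= k)%N -> k_stein k G T ->
         forall v : 'rV[complex R]_m, nullcone G v ->
           \tr (jacobi (cplxG G) (cplxT T) v ^+ k) = 0),
      (k_stein m G T ->
         forall v : 'rV[complex R]_m, nullcone G v ->
           nilpotent_mx (jacobi (cplxG G) (cplxT T) v)) &
      ((forall v : 'rV[complex R]_m, nullcone G v ->
           \tr (jacobi (cplxG G) (cplxT T) v) = 0) ->
         einstein G T)].
Proof.
move=> m_ge3 sG detG hT; split.
- exact: k_stein_trace_null_cone.
- exact: m_stein_nilpotent_null_cone.
- exact: einstein_of_null_cone_trace (ltnW m_ge3) sG detG hT.
Qed.
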